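(* Let $\hat\tau^{\mathrm{ols}}$ be the ordinary least squares coefficient of $Z_{ij}$ obtained by fitting the one-stage meta-analysis model $Y_{ij}=\phi+\tau Z_{ij}+\sum_{l\in F}\{\beta_{i,l}X_{ij,l}+\gamma_{i,l}X_{ij,l}Z_{ij}\}+\sum_{l\in C}\{\beta_l X_{ij,l}+\gamma_l X_{ij,l}Z_{ij}\}+\epsilon_{ij}$, i.e. the OLS regression of $Y_{ij}$ on an intercept, $Z_{ij}$, the regressors $1\{i=i'\}X_{ij,l}$ ($l\in F$, $i'=1,\dots,m$), the regressors $X_{ij,l}$ ($l\in C$), and all of these regressors multiplied by $Z_{ij}$. For $z\in\{0,1\}$ let $(\hat w^{\mathrm{ols}}_{z,ij})_{ij:Z_{ij}=z}$ be the solution of minimize $\sum_{i=1}^m\sum_{j:Z_{ij}=z}w_{ij}^2$ subject to $\sum_{i=1}^m\sum_{j:Z_{ij}=z}w_{ij}X_{ij,l}=0$ for all $l\in C$; $\sum_{j:Z_{ij}=z}w_{ij}X_{ij,l}=0$ for all $l\in F$ and all $i=1,\dots,m$; and $\sum_{i=1}^m\sum_{j:Z_{ij}=z}w_{ij}=1$. Then $\hat\tau^{\mathrm{ols}}=\sum_{i=1}^m\sum_{j:Z_{ij}=1}\hat w^{\mathrm{ols}}_{1,ij}Y_{ij}-\sum_{i=1}^m\sum_{j:Z_{ij}=0}\hat w^{\mathrm{ols}}_{0,ij}Y_{ij}$.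
   Context: Individual-level data from $m$ studies: study $i$ has $n_i$ individuals; individual $ij$ has binary treatment $Z_{ij}$, covariate vector $X_{ij}=(X_{ij,1},\dots,X_{ij,p})^\top\in\mathbb{R}^p$ and outcome $Y_{ij}$. The covariate indices are split into a set $F$ (covariates with study-specific, ''fixed'', coefficients) and a set $C$ (covariates with coefficients common to all studies), with $F\cup C=\{1,\dots,p\}$. The intercept $\phi$ and treatment effect $\tau$ are common to all studies. The OLS fit is assumed to be well defined (design matrix of full column rank). *)

From mathcomp Require Import all_boot all_order all_algebra.
Set Implicit Arguments. Unset Strict Implicit. Unset Printing Implicit Defensive.
Import Order.TTheory GRing.Theory Num.Theory.
Local Open Scope ring_scope.

(* Data layout: m studies; study i has n i individuals indexed by 'I_(n i);
   Z i j : bool (treatment), X i j : 'I_p -> R (covariates), Y i j : R. *)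

(* Regressor (column) indices of the one-stage model:
   (b, base) where b = true means "multiplied by Z_ij", and
   base = None                : the constant 1 (so (false,None) = intercept,
                                (true,None) = Z_ij, the column of tau);
   base = Some (Some i', l)   : 1{i = i'} X_ij,l   (meant for l in F);
   base = Some (None, l)      : X_ij,l             (meant for l in C). *)
Definition col_idx (m p : nat) : finType :=
  (bool * option (option 'I_m * 'I_p))%type.

Definition valid_col (m p : nat) (F C : {set 'I_p}) (c : col_idx m p) : bool :=
  match c.2 with
  | None => true
  | Some (Some _, l) => l \in F
  | Some (None, l) => l \in C
  end.

Definition regressor (R : realDomainType) (m p : nat) (n : 'I_m -> nat)
  (Z : forall i : 'I_m, 'I_(n i) -> bool)
  (X : forall i : 'I_m, 'I_(n i) -> 'I_p -> R)
  (c : col_idx m p) (i : 'I_m) (j : 'I_(n i)) : R :=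
  (match c.2 with
   | None => 1
   | Some (Some i', l) => (i == i')%:R * X i j l
   | Some (None, l) => X i j l
   end) * (if c.1 then (Z i j)%:R else 1).

Arguments regressor {R m p n} Z X c i j.

Definition fitted (R : realDomainType) (m p : nat) (n : 'I_m -> nat)
  (F C : {set 'I_p}) (Z : forall i : 'I_m, 'I_(n i) -> bool)
  (X : forall i : 'I_m, 'I_(n i) -> 'I_p -> R)
  (beta : col_idx m p -> R) (i : 'I_m) (j : 'I_(n i)) : R :=
  \sum_(c | valid_col F C c) beta c * regressor Z X c i j.

Arguments fitted {R m p n} F C Z X beta i j.

Definition rss (R : realDomainType) (m p : nat) (n : 'I_m -> nat)
  (F C : {set 'I_p}) (Z : forall i : 'I_m, 'I_(n i) -> bool)
  (X : forall i : 'I_m, 'I_(n i) -> 'I_p -> R)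
  (Y : forall i : 'I_m, 'I_(n i) -> R) (beta : col_idx m p -> R) : R :=
  \sum_(i < m) \sum_(j < n i) (Y i j - fitted F C Z X beta i j) ^+ 2.

Definition design_full_rank (R : realDomainType) (m p : nat) (n : 'I_m -> nat)
  (F C : {set 'I_p}) (Z : forall i : 'I_m, 'I_(n i) -> bool)
  (X : forall i : 'I_m, 'I_(n i) -> 'I_p -> R) : Prop :=
  forall beta : col_idx m p -> R,
    (forall (i : 'I_m) (j : 'I_(n i)), fitted F C Z X beta i j = 0) ->
    forall c, valid_col F C c -> beta c = 0.

Definition is_ols (R : realDomainType) (m p : nat) (n : 'I_m -> nat)
  (F C : {set 'I_p}) (Z : forall i : 'I_m, 'I_(n i) -> bool)
  (X : forall i : 'I_m, 'I_(n i) -> 'I_p -> R)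
  (Y : forall i : 'I_m, 'I_(n i) -> R) (beta : col_idx m p -> R) : Prop :=
  forall beta' : col_idx m p -> R, rss F C Z X Y beta <= rss F C Z X Y beta'.

Definition tau_col (m p : nat) : col_idx m p := (true, None).

Definition w_feasible (R : realDomainType) (m p : nat) (n : 'I_m -> nat)
  (F C : {set 'I_p}) (Z : forall i : 'I_m, 'I_(n i) -> bool)
  (X : forall i : 'I_m, 'I_(n i) -> 'I_p -> R) (z : bool)
  (w : forall i : 'I_m, 'I_(n i) -> R) : Prop :=
  [/\ forall l, l \in C ->
        \sum_(i < m) \sum_(j < n i | Z i j == z) w i j * X i j l = 0,
      forall l, l \in F -> forall i : 'I_m,
        \sum_(j < n i | Z i j == z) w i j * X i j l = 0
    & \sum_(i < m) \sum_(j < n i | Z i j == z) w i j = 1].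

Definition w_objective (R : realDomainType) (m : nat) (n : 'I_m -> nat)
  (Z : forall i : 'I_m, 'I_(n i) -> bool) (z : bool)
  (w : forall i : 'I_m, 'I_(n i) -> R) : R :=
  \sum_(i < m) \sum_(j < n i | Z i j == z) w i j ^+ 2.

(* w is a solution of the weighting problem for arm z (only its values on
   individuals with Z_ij = z are relevant). *)
Definition w_solution (R : realDomainType) (m p : nat) (n : 'I_m -> nat)
  (F C : {set 'I_p}) (Z : forall i : 'I_m, 'I_(n i) -> bool)
  (X : forall i : 'I_m, 'I_(n i) -> 'I_p -> R) (z : bool)
  (w : forall i : 'I_m, 'I_(n i) -> R) : Prop :=
  w_feasible F C Z X z w /\
  forall w' : forall i : 'I_m, 'I_(n i) -> R,
    w_feasible F C Z X z w' -> w_objective Z z w <= w_objective Z z w'.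

(** Split [Y] into fitted values and residuals.  On arm [z] every regressor
of the model is an uninteracted one, times [z] for the interactions; weights
satisfying the constraints of arm [z] annihilate all uninteracted regressors
except the intercept, whose weighted sum is 1, so they reproduce the fitted
values as [phi + z tau].  The residual part vanishes: the normal equations of
a regressor and of its interaction together make the residuals of each arm
orthogonal to all constraint columns, i.e. a direction of the affine
constraint set, and the minimum-norm weights are orthogonal to every such
direction. *)

From mathcomp Require Import all_boot all_order all_algebra.
From mathcomp Require Import ring lra.
Set Implicit Arguments. Unset Strict Implicit. Unset Printing Implicit Defensive.
Import Order.TTheory GRing.Theory Num.Theory.
Local Open Scope ring_scope.

Lemma quadratic_ge0_lin_eq0 (R : realFieldType) (B D : R) :
  0 <= D -> (forall t, 0 <= t * B + t ^+ 2 * D) -> B = 0.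
Proof.
move=> D_ge0 quad_ge0.
have D1_neq0 : D + 1 != 0 by rewrite gt_eqF //; lra.
have := quad_ge0 (- B / (D + 1)).
have -> : - B / (D + 1) * B + (- B / (D + 1)) ^+ 2 * D = - (B / (D + 1)) ^+ 2.
  by field.
rewrite oppr_ge0 => sqr_le0.
have /eqP : (B / (D + 1)) ^+ 2 = 0 by apply/le_anti; rewrite sqr_le0 sqr_ge0.
by rewrite sqrf_eq0 mulf_eq0 invr_eq0 (negbTE D1_neq0) orbF => /eqP.
Qed.

Lemma sum_sqr_min_orth (R : realFieldType) (I : finType) (P : pred I)
    (a v : I -> R) :
  (forall t, \sum_(k | P k) a k ^+ 2 <= \sum_(k | P k) (a k + t * v k) ^+ 2) ->
  \sum_(k | P k) a k * v k = 0.
Proof.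
move=> a_min.
suff /eqP : 2 * \sum_(k | P k) a k * v k = 0.
  by rewrite mulf_eq0 pnatr_eq0 => /eqP.
apply: (@quadratic_ge0_lin_eq0 _ _ (\sum_(k | P k) v k ^+ 2)).
  by apply: sumr_ge0 => k _; apply: sqr_ge0.
move=> t; rewrite !mulr_sumr -big_split /=.
have expand k :
    (a k + t * v k) ^+ 2 - a k ^+ 2 = t * (2 * (a k * v k)) + t ^+ 2 * v k ^+ 2.
  by ring.
by have := a_min t; rewrite -subr_ge0 -sumrB (eq_bigr _ (fun k _ => expand k)).
Qed.

Section OneStageModel.

Variables (R : realFieldType) (m p : nat) (n : 'I_m -> nat) (F C : {set 'I_p}).
Variable Z : forall i : 'I_m, 'I_(n i) -> bool.
Variable X : forall i : 'I_m, 'I_(n i) -> 'I_p -> R.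
Arguments Z : clear implicits.
Arguments X : clear implicits.

Lemma double_sum_sqr_min_orth (P : forall i, pred 'I_(n i))
    (a v : forall i : 'I_m, 'I_(n i) -> R) :
  (forall t, \sum_(i < m) \sum_(j < n i | P i j) a i j ^+ 2
             <= \sum_(i < m) \sum_(j < n i | P i j) (a i j + t * v i j) ^+ 2) ->
  \sum_(i < m) \sum_(j < n i | P i j) a i j * v i j = 0.
Proof.
move=> a_min; rewrite sig_big_dep; apply: sum_sqr_min_orth => t.
by have := a_min t; rewrite !sig_big_dep.
Qed.

Definition arm_sum (z : bool) (f : forall i : 'I_m, 'I_(n i) -> R) : R :=
  \sum_(i < m) \sum_(j < n i | Z i j == z) f i j.

Lemma eq_arm_sum z (f g : forall i : 'I_m, 'I_(n i) -> R) :
  (forall i j, f i j = g i j) -> arm_sum z f = arm_sum z g.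
Proof. by move=> fg; apply: eq_bigr => i _; apply: eq_bigr => j _. Qed.

Lemma arm_sum_comb z a b (f g : forall i : 'I_m, 'I_(n i) -> R) :
  arm_sum z (fun i j => a * f i j + b * g i j) = a * arm_sum z f + b * arm_sum z g.
Proof.
rewrite /arm_sum !mulr_sumr -big_split; apply: eq_bigr => i _ /=.
by rewrite !mulr_sumr -big_split.
Qed.

Lemma sum_arms (f : forall i : 'I_m, 'I_(n i) -> R) :
  \sum_(i < m) \sum_(j < n i) f i j = arm_sum true f + arm_sum false f.
Proof.
rewrite /arm_sum -big_split; apply: eq_bigr => i _.
rewrite (bigID (fun j => Z i j == true)) /=; congr (_ + _).
by apply: eq_bigl => j; case: (Z i j).
Qed.

Lemma arm_sum_treated (f : forall i : 'I_m, 'I_(n i) -> R) :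
  arm_sum true f = \sum_(i < m) \sum_(j < n i | Z i j) f i j.
Proof. by apply: eq_bigr => i _; apply: eq_bigl => j; case: (Z i j). Qed.

Lemma arm_sum_control (f : forall i : 'I_m, 'I_(n i) -> R) :
  arm_sum false f = \sum_(i < m) \sum_(j < n i | ~~ Z i j) f i j.
Proof. by apply: eq_bigr => i _; apply: eq_bigl => j; case: (Z i j). Qed.

Lemma regressor_true o i j :
  regressor Z X (true, o) i j = (Z i j)%:R * regressor Z X (false, o) i j.
Proof. by rewrite /regressor /= mulr1 mulrC. Qed.

Lemma arm_sum_interacted z w o :
  arm_sum z (fun i j => w i j * regressor Z X (true, o) i j) =
  z%:R * arm_sum z (fun i j => w i j * regressor Z X (false, o) i j).
Proof.
rewrite /arm_sum mulr_sumr; apply: eq_bigr => i _; rewrite mulr_sumr.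
by apply: eq_bigr => j /eqP Zz; rewrite regressor_true Zz mulrCA.
Qed.

Lemma arm_sum_study_covariate z w (i : 'I_m) (l : 'I_p) :
  arm_sum z (fun i' j => w i' j * regressor Z X (false, Some (Some i, l)) i' j) =
  \sum_(j < n i | Z i j == z) w i j * X i j l.
Proof.
rewrite /arm_sum (bigD1 i) //= [X in _ + X]big1 => [|i' /negbTE i'i]; last first.
  by apply: big1 => j _; rewrite /regressor /= i'i !mul0r mulr0.
by rewrite addr0; apply: eq_bigr => j _; rewrite /regressor /= eqxx mul1r mulr1.
Qed.

Lemma w_feasibleE z w :
  w_feasible F C Z X z w <->
  (forall o, valid_col F C (false, o) ->
     arm_sum z (fun i j => w i j * regressor Z X (false, o) i j) = (o == None)%:R).
Proof.
have common_regressor l i j : regressor Z X (false, Some (None, l)) i j = X i j l.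
  by rewrite /regressor /= mulr1.
split=> [[wC wF w1] [[[i|] l]|] /= valid | w_eq].
- by rewrite arm_sum_study_covariate wF.
- by apply: etrans (wC l valid); apply: eq_arm_sum => i j; rewrite common_regressor.
- by rewrite -w1; apply: eq_arm_sum => i j; rewrite /regressor /= !mulr1.
split=> [l lC | l lF i |].
- apply: etrans (w_eq (Some (None, l)) lC).
  by apply: eq_arm_sum => i j; rewrite common_regressor.
- by rewrite -arm_sum_study_covariate (w_eq (Some (Some i, l))).
- apply: etrans (w_eq None isT).
  by apply: eq_arm_sum => i j; rewrite /regressor /= !mulr1.
Qed.

Lemma w_solution_orth z w v :
  w_solution F C Z X z w ->
  (forall o, valid_col F C (false, o) ->
     arm_sum z (fun i j => v i j * regressor Z X (false, o) i j) = 0) ->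
  arm_sum z (fun i j => w i j * v i j) = 0.
Proof.
move=> [/w_feasibleE w_eq w_min] v_dir.
apply: double_sum_sqr_min_orth => t; apply: w_min; apply/w_feasibleE => o valid.
rewrite (@eq_arm_sum _ _ (fun i j => 1 * (w i j * regressor Z X (false, o) i j)
                                   + t * (v i j * regressor Z X (false, o) i j))).
  by rewrite arm_sum_comb w_eq // v_dir // mul1r mulr0 addr0.
by move=> i j; ring.
Qed.

Lemma w_feasible_fitted z w beta :
  w_feasible F C Z X z w ->
  arm_sum z (fun i j => w i j * fitted F C Z X beta i j) =
  beta (false, None) + z%:R * beta (tau_col m p).
Proof.
move=> /w_feasibleE w_eq.
have -> : arm_sum z (fun i j => w i j * fitted F C Z X beta i j) =
    \sum_(c | valid_col F C c) beta c * arm_sum z (fun i j => w i j * regressor Z X c i j).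
  rewrite /arm_sum sig_big_dep; under eq_bigr do rewrite /fitted mulr_sumr.
  rewrite exchange_big; apply: eq_bigr => c _; rewrite sig_big_dep mulr_sumr.
  by apply: eq_bigr => k _; rewrite mulrCA.
rewrite (bigD1 (false, None)) // (bigD1 (true, None)) //=.
rewrite [X in _ + (_ + X)]big1 => [|[b o]].
  by rewrite arm_sum_interacted !w_eq // eqxx !mulr1 addr0 [_ * z%:R]mulrC.
move=> /andP[/andP[valid not_intercept] not_tau].
case: o valid not_intercept not_tau => [o valid _ _|]; last by case: b.
by case: b valid => valid; rewrite ?arm_sum_interacted w_eq // !mulr0.
Qed.

Lemma fitted_shift beta c t i j :
  valid_col F C c ->
  fitted F C Z X (fun c' => beta c' - (c' == c)%:R * t) i j =
  fitted F C Z X beta i j - t * regressor Z X c i j.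
Proof.
move=> valid; rewrite /fitted.
under eq_bigr => c' _ do rewrite mulrBl.
rewrite sumrB; congr (_ - _).
rewrite (bigD1 c) //= eqxx mul1r big1 ?addr0 // => c' /andP[_ /negbTE ->].
by rewrite !mul0r.
Qed.

Lemma ols_normal_eq Y beta c :
  is_ols F C Z X Y beta -> valid_col F C c ->
  \sum_(i < m) \sum_(j < n i)
     (Y i j - fitted F C Z X beta i j) * regressor Z X c i j = 0.
Proof.
move=> beta_min valid; apply: double_sum_sqr_min_orth => t.
suff -> : \sum_(i < m) \sum_(j < n i)
    (Y i j - fitted F C Z X beta i j + t * regressor Z X c i j) ^+ 2 =
    rss F C Z X Y (fun c' => beta c' - (c' == c)%:R * t) by exact: beta_min.
apply: eq_bigr => i _; apply: eq_bigr => j _.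
by rewrite fitted_shift //; congr (_ ^+ 2); ring.
Qed.

Lemma ols_residual_arm_orth Y beta z o :
  is_ols F C Z X Y beta -> valid_col F C (false, o) ->
  arm_sum z (fun i j =>
    (Y i j - fitted F C Z X beta i j) * regressor Z X (false, o) i j) = 0.
Proof.
move=> beta_ols valid.
have treated : arm_sum true (fun i j =>
    (Y i j - fitted F C Z X beta i j) * regressor Z X (false, o) i j) = 0.
  rewrite -(@ols_normal_eq Y beta (true, o)) //; apply: eq_bigr => i _.
  rewrite big_mkcond; apply: eq_bigr => j _.
  by rewrite regressor_true; case: (Z i j); rewrite /= ?mul1r ?mul0r ?mulr0.
case: z => //; have := @ols_normal_eq Y beta (false, o) beta_ols valid.
by rewrite sum_arms treated add0r.
Qed.

Lemma w_solution_outcome Y beta z w :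
  is_ols F C Z X Y beta -> w_solution F C Z X z w ->
  arm_sum z (fun i j => w i j * Y i j) = beta (false, None) + z%:R * beta (tau_col m p).
Proof.
move=> beta_ols w_sol.
pose r i j := Y i j - fitted F C Z X beta i j.
have w_r : arm_sum z (fun i j => w i j * r i j) = 0.
  by apply: w_solution_orth w_sol _ => o; apply: ols_residual_arm_orth.
rewrite (@eq_arm_sum _ _ (fun i j => 1 * (w i j * fitted F C Z X beta i j)
                                   + 1 * (w i j * r i j))).
  by rewrite arm_sum_comb w_r (w_feasible_fitted _ w_sol.1) mul1r mulr0 addr0.
by move=> i j; rewrite /r; ring.
Qed.

End OneStageModel.

Theorem proposition2 (R : realFieldType) (m p : nat) (n : 'I_m -> nat)
  (F C : {set 'I_p})
  (Z : forall i : 'I_m, 'I_(n i) -> bool)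
  (X : forall i : 'I_m, 'I_(n i) -> 'I_p -> R)
  (Y : forall i : 'I_m, 'I_(n i) -> R)
  (hFC : F :|: C = [set: 'I_p])
  (hrank : design_full_rank F C Z X)
  (beta : col_idx m p -> R) (hols : is_ols F C Z X Y beta)
  (w1 w0 : forall i : 'I_m, 'I_(n i) -> R)
  (hw1 : w_solution F C Z X true w1)
  (hw0 : w_solution F C Z X false w0) :
  beta (tau_col m p) =
    \sum_(i < m) \sum_(j < n i | Z i j) w1 i j * Y i j
  - \sum_(i < m) \sum_(j < n i | ~~ Z i j) w0 i j * Y i j.
Proof.
rewrite -arm_sum_treated -arm_sum_control.
rewrite (w_solution_outcome hols hw1) (w_solution_outcome hols hw0) /=.
by rewrite mul1r mul0r addr0 addrC addKr.
Qed.
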